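(* Let $\phi$ be a Bernstein function with $\phi(0+)=0$ such that for some $\delta_0\in(0,1]$ and $c>0$, $c(R/r)^{\delta_0}\le\phi(R)/\phi(r)$ for all $0<r<R<\infty$. For $t,\lambda>0$ let $$g_t(\lambda)=\int_0^\infty\big(e^{-t\phi(\lambda r^2)}-e^{-t\phi(2\lambda r^2)}\big)e^{-r^2/4}r^{d-1}\,dr.$$ Then there is $N=N(c,\delta_0,d)$ such that $g_t(v^{-1})\le N\,t\,\phi(v^{-1})$ for all $t,v>0$. *)

From HB Require Import structures.
From mathcomp Require Import all_boot all_order all_algebra.
From mathcomp Require Import all_classical all_reals all_analysis.
Set Implicit Arguments. Unset Strict Implicit. Unset Printing Implicit Defensive.
Import Order.TTheory GRing.Theory Num.Theory.
Import numFieldNormedType.Exports.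
Local Open Scope classical_set_scope.
Local Open Scope ring_scope.

(* Bernstein function on (0,oo): nonnegative, C^oo on (0,oo), and
   (-1)^(n-1) phi^(n) >= 0 for all n >= 1.  Values at x <= 0 are irrelevant. *)
Definition bernstein {R : realType} (phi : R -> R) : Prop :=
  (forall x : R, 0 < x -> 0 <= phi x) /\
  (forall (n : nat) (x : R), 0 < x -> derivable (derive1n n phi) x 1) /\
  (forall (n : nat) (x : R), 0 < x -> 0 <= (-1) ^+ n * derive1n n.+1 phi x).

Definition g_fun {R : realType} (d : nat) (phi : R -> R) (t lambda : R) : \bar R :=
  (\int[@lebesgue_measure R]_(r in `]0%R, +oo[%classic)
     ((expR (- (t * phi (lambda * r ^+ 2))) - expR (- (t * phi (2 * lambda * r ^+ 2))))
        * expR (- (r ^+ 2 / 4)) * r ^+ d.-1)%:E)%E.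

(* The integrand is at most [t phi(2 lambda r^2)] times the Gaussian weight, since
   [e^{-a} - e^{-b} <= 1 - (1 - b) = b] for [a >= 0].  Below [lambda] the lower scaling
   condition gives [phi(y) <= phi(lambda) / c]; above it, concavity of the Bernstein
   function gives [phi(y) <= 2 (y / lambda) phi(lambda)].  Hence the integrand is at most
   [t phi(lambda) (c^-1 + 4 r^2) r^(d-1) e^{-r^2/4}], which is dominated by a constant
   multiple of [t phi(lambda) e^{-r}], whose integral over [(0, oo)] is finite. *)
From HB Require Import structures.
From mathcomp Require Import all_boot all_order all_algebra.
From mathcomp Require Import all_classical all_reals all_analysis.
From mathcomp Require Import ring lra measurable_realfun.
Import Order.TTheory GRing.Theory Num.Theory.
Import numFieldNormedType.Exports.
Local Open Scope classical_set_scope.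
Local Open Scope ring_scope.

Section integral_majorant.
Context d {T : measurableType d} {R : realType}.
Variable mu : {measure set T -> \bar R}.
Local Open Scope ereal_scope.

(* No measurability of [f] is needed: [\int f <= \int f^\+], and the latter is a
   supremum over simple functions below [f^\+ <= g]. *)
Lemma le_integral_majorant (D : set T) (f g : T -> \bar R) :
  (forall x, D x -> f x <= g x) -> (forall x, D x -> 0 <= g x) ->
  \int[mu]_(x in D) f x <= \int[mu]_(x in D) g x.
Proof.
move=> fg g0; rewrite [X in X <= _]integralE.
apply: (@le_trans _ _ (\int[mu]_(x in D) f^\+ x)).
  have fneg_ge0 : 0 <= \int[mu]_(x in D) f^\- x.
    by apply: integral_ge0 => x _; exact: funeneg_ge0.
  by apply: le_trans (leeB (lexx _) fneg_ge0) _; rewrite sube0.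
rewrite ge0_integralE; last by move=> x _; exact: funepos_ge0.
rewrite ge0_integralE //; apply: ereal_sup_le => _ [h hle <-]; exists h => //= x.
apply: le_trans (hle x) _; rewrite /patch; case: ifP => // /set_mem Dx.
by rewrite funeposE ge_max fg //= g0.
Qed.

End integral_majorant.

Lemma integral_itvo_le_expRN (R : realType) (f : R -> R) (K : R) : 0 <= K ->
  (forall r, 0 < r -> f r <= K * expR (- r)) ->
  (\int[@lebesgue_measure R]_(r in `]0%R, +oo[%classic) (f r)%:E <= K%:E)%E.
Proof.
move=> K0 fK; rewrite integral_mkcond.
have K_pdf_ge0 x : (0 <= (K * exponential_pdf 1 x)%:E)%E.
  by rewrite lee_fin mulr_ge0 // exponential_pdf_ge0.
apply: (@le_trans _ _ (\int[lebesgue_measure]_x (K * exponential_pdf 1 x)%:E)%E).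
  apply: le_integral_majorant => // x _; rewrite /patch; case: ifP => // /set_mem.
  rewrite /= in_itv /= andbT => x0.
  by rewrite lee_fin exponential_pdfE ?(ltW x0) // mul1r mulN1r fK.
under eq_integral do rewrite EFinM.
rewrite ge0_integralZl ?integral_exponential_pdf ?mule1 //.
- by apply/measurable_EFinP; exact: measurable_exponential_pdf.
- by move=> x _; rewrite lee_fin exponential_pdf_ge0.
Qed.

Section exp_bounds.
Context {R : realType}.

Lemma expRN_subr_le (a b : R) : 0 <= a -> expR (- a) - expR (- b) <= b.
Proof.
move=> a0; have := expR_ge1Dx (- b).
have : expR (- a) <= 1 by rewrite expR_le1 oppr_le0.
lra.
Qed.

Lemma exprn_le_fact_expR (n : nat) (x : R) :
  0 <= x -> x ^+ n <= n`!%:R * expR x.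
Proof.
case: n => [|n] x0; first by rewrite expr0 fact0 mul1r -expR0 ler_expR.
have fact_gt0 : 0 < n.+1`!%:R :> R by rewrite ltr0n fact_gt0.
rewrite mulrC -ler_pdivrMr //.
have := expR_ge1Dxn n x0; lra.
Qed.

Lemma expR_subr_sqr_le (x : R) :
  expR x * expR (- (x ^+ 2 / 4)) <= expR 4 * expR (- x).
Proof. by rewrite -!expRD ler_expR; have := sqr_ge0 (x - 4); nra. Qed.

Lemma sqr_poly_gauss_le (n : nat) (a b x : R) :
  0 <= a -> 0 <= b -> 0 <= x ->
  (a + b * x ^+ 2) * x ^+ n * expR (- (x ^+ 2 / 4))
    <= (a * n`!%:R + b * n.+2`!%:R) * expR 4 * expR (- x).
Proof.
move=> a0 b0 x0.
have xn := exprn_le_fact_expR n x x0.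
have xn2 := exprn_le_fact_expR n.+2 x x0.
have poly_le : (a + b * x ^+ 2) * x ^+ n <= (a * n`!%:R + b * n.+2`!%:R) * expR x.
  rewrite mulrDl -mulrA -exprD add2n mulrDl -!mulrA.
  by apply: lerD; apply: ler_wpM2l.
have coef_ge0 : 0 <= a * n`!%:R + b * n.+2`!%:R by rewrite addr_ge0 // mulr_ge0.
apply: le_trans (ler_wpM2r (expR_ge0 _) poly_le) _.
set C := a * _ + _ in coef_ge0 *.
by rewrite -!(mulrA C); apply: ler_wpM2l => //; exact: expR_subr_sqr_le.
Qed.

End exp_bounds.

Section concave_growth.
Context {R : realType} {phi : R -> R}.
Hypothesis phi_ge0 : forall x, 0 < x -> 0 <= phi x.
Hypothesis phi_derivable : forall x, 0 < x -> derivable phi x 1.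
Hypothesis phi'_derivable : forall x, 0 < x -> derivable (derive1 phi) x 1.
Hypothesis phi''_le0 : forall x, 0 < x -> derive1 (derive1 phi) x <= 0.

Let derivable_on_pos {f : R -> R} {a b : R} : 0 < a ->
  (forall x, 0 < x -> derivable f x 1) -> forall x, x \in `]a, b[ -> derivable f x 1.
Proof. by move=> a0 df x; rewrite in_itv /= => /andP[ax _]; apply/df/(lt_trans a0). Qed.

Let continuous_on_pos {f : R -> R} {a} (b : R) : 0 < a ->
  (forall x, 0 < x -> derivable f x 1) -> {within `[a, b], continuous f}.
Proof.
move=> a0 df; apply: derivable_within_continuous => x.
by rewrite in_itv /= => /andP[ax _]; apply/df/(lt_le_trans a0).
Qed.

Let mvt_phi {a b : R} : 0 < a -> a < b ->
  exists2 z, a < z < b & phi b - phi a = derive1 phi z * (b - a).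
Proof.
move=> a0 ab.
have phi_is_derive z : z \in `]a, b[ -> is_derive z 1 phi (derive1 phi z).
  move=> zab; rewrite derive1E; apply: derivableP.
  exact: derivable_on_pos a0 phi_derivable z zab.
have [z] := MVT ab phi_is_derive (continuous_on_pos b a0 phi_derivable).
by rewrite in_itv /= => zab ->; exists z.
Qed.

Lemma concave_ge0_growth (x y : R) : 0 < x -> x <= y -> x * phi y <= 2 * y * phi x.
Proof.
move=> x0 xy; have phix_ge0 := phi_ge0 _ x0.
have x20 : 0 < x / 2 by rewrite divr_gt0.
have x2x : x / 2 < x by lra.
have [eta /andP[x2eta etax] phi_x2x] := mvt_phi x20 x2x.
have slope_eta : derive1 phi eta * x <= 2 * phi x.
  by have := phi_ge0 _ x20; nra.
have [<-|xy'] := eqVneq x y; first nra.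
have {xy xy'} xy : x < y by rewrite lt_neqAle xy' xy.
have [xi /andP[xxi xiy] phi_xy] := mvt_phi x0 xy.
have eta0 : 0 < eta := lt_trans x20 x2eta.
have phi'_nincr : derive1 phi xi <= derive1 phi eta.
  apply: (@ler0_derive1_nincr _ _ eta xi) => //.
  - exact: derivable_on_pos eta0 phi'_derivable.
  - by move=> z; rewrite in_itv /= => /andP[etaz _]; apply/phi''_le0/(lt_trans eta0).
  - exact: continuous_on_pos xi eta0 phi'_derivable.
  - by apply: ltW; apply: lt_trans xxi.
have : (derive1 phi eta - derive1 phi xi) * ((y - x) * x) >= 0.
  by apply: mulr_ge0; rewrite ?subr_ge0 // mulr_ge0 // ?subr_ge0 ltW.
have : (2 * phi x - derive1 phi eta * x) * (y - x) >= 0.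
  by apply: mulr_ge0; rewrite subr_ge0 // ltW.
nra.
Qed.

Context {c delta : R}.
Hypothesis c_gt0 : 0 < c.
Hypothesis delta_ge0 : 0 <= delta.
Hypothesis phi_lower_scaling : forall r r' : R, 0 < r -> r < r' ->
  c * powR (r' / r) delta <= phi r' / phi r.

Lemma lower_scaling_le (x y : R) : 0 < y -> y < x -> c * phi y <= phi x.
Proof.
move=> y0 yx; have [->|phiy_neq0] := eqVneq (phi y) 0.
  by rewrite mulr0; apply/phi_ge0/(lt_trans y0).
have phiy_gt0 : 0 < phi y by rewrite lt_def phiy_neq0 phi_ge0.
rewrite -ler_pdivlMr //; apply: le_trans (phi_lower_scaling _ _ y0 yx).
rewrite ler_peMr ?(ltW c_gt0) // -(powRr0 (x / y)); apply: ler_powR => //.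
by rewrite ler_pdivlMr // mul1r ltW.
Qed.

Lemma le_lower_scaling_concave (x y : R) : 0 < x -> 0 < y ->
  phi y <= (c^-1 + 2 * (y / x)) * phi x.
Proof.
move=> x0 y0; have phix_ge0 := phi_ge0 _ x0.
have [yx|xy] := ltP y x.
  have : phi y <= c^-1 * phi x by rewrite mulrC ler_pdivlMr // mulrC lower_scaling_le.
  have : 0 <= 2 * (y / x) * phi x by rewrite !mulr_ge0 // ?invr_ge0 ltW.
  lra.
have : phi y <= 2 * (y / x) * phi x.
  by rewrite mulrA mulrAC ler_pdivlMr // mulrC; exact: concave_ge0_growth.
have : 0 <= c^-1 * phi x by rewrite mulr_ge0 // invr_ge0 ltW.
lra.
Qed.

End concave_growth.

Lemma bernstein_derive2_le0 {R : realType} {phi : R -> R} :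
  bernstein phi -> forall x, 0 < x -> derive1 (derive1 phi) x <= 0.
Proof. by move=> [_ [_ sgn]] x x0; have := sgn 1%N x x0; rewrite expr1 mulN1r oppr_ge0. Qed.

Definition g_fun_const {R : realType} (c : R) (d : nat) : R :=
  (c^-1 * (d.-1)`!%:R + 4 * (d.-1).+2`!%:R) * expR 4.

Section g_fun_bound.
Context {R : realType} (d : nat) {phi : R -> R} {c delta : R}.
Hypothesis phi_bernstein : bernstein phi.
Hypothesis c_gt0 : 0 < c.
Hypothesis delta_ge0 : 0 <= delta.
Hypothesis phi_lower_scaling : forall r r' : R, 0 < r -> r < r' ->
  c * powR (r' / r) delta <= phi r' / phi r.

Let phi_ge0 : forall x, 0 < x -> 0 <= phi x := phi_bernstein.1.

Lemma g_integrand_le (t lam r : R) : 0 < t -> 0 < lam -> 0 < r ->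
  (expR (- (t * phi (lam * r ^+ 2))) - expR (- (t * phi (2 * lam * r ^+ 2))))
    * expR (- (r ^+ 2 / 4)) * r ^+ d.-1
  <= g_fun_const c d * t * phi lam * expR (- r).
Proof.
move=> t0 lam0 r0; have [_ [phi_derivable _]] := phi_bernstein.
have r2_gt0 : 0 < r ^+ 2 by rewrite exprn_gt0.
have phi_lam_ge0 := phi_ge0 _ lam0.
have gauss_ge0 : 0 <= expR (- (r ^+ 2 / 4)) * r ^+ d.-1.
  by rewrite mulr_ge0 ?expR_ge0 // exprn_ge0 // ltW.
have a_ge0 : 0 <= t * phi (lam * r ^+ 2).
  by rewrite mulr_ge0 ?(ltW t0) // phi_ge0 // mulr_gt0.
have b_le : t * phi (2 * lam * r ^+ 2) <= t * phi lam * (c^-1 + 4 * r ^+ 2).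
  have y_gt0 : 0 < 2 * lam * r ^+ 2 by rewrite !mulr_gt0.
  have := le_lower_scaling_concave phi_ge0 (phi_derivable 0%N) (phi_derivable 1%N)
    (bernstein_derive2_le0 phi_bernstein) c_gt0 delta_ge0 phi_lower_scaling
    _ _ lam0 y_gt0.
  rewrite (_ : 2 * (2 * lam * r ^+ 2 / lam) = 4 * r ^+ 2); last first.
    by field; rewrite gt_eqF.
  by rewrite -[t * phi lam * _]mulrA [phi lam * _]mulrC; apply: ler_wpM2l; exact: ltW.
rewrite -[(_ - _) * _ * _]mulrA.
apply: le_trans (ler_wpM2r gauss_ge0 (expRN_subr_le _ _ a_ge0)) _.
apply: le_trans (ler_wpM2r gauss_ge0 b_le) _.
have cinv_ge0 : 0 <= c^-1 by rewrite invr_ge0 ltW.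
have := sqr_poly_gauss_le d.-1 _ _ _ cinv_ge0 (ler0n _ 4) (ltW r0).
rewrite /g_fun_const => /(ler_wpM2l (mulr_ge0 (ltW t0) phi_lam_ge0)).
lra.
Qed.

Lemma g_fun_le (t lam : R) : 0 < t -> 0 < lam ->
  (g_fun d phi t lam <= (g_fun_const c d * t * phi lam)%:E)%E.
Proof.
move=> t0 lam0; apply: integral_itvo_le_expRN => [|r r0]; last exact: g_integrand_le.
have cinv_ge0 : 0 <= c^-1 by rewrite invr_ge0 ltW.
have const_ge0 : 0 <= g_fun_const c d.
  by rewrite mulr_ge0 ?expR_ge0 // addr_ge0 // mulr_ge0.
apply: mulr_ge0; last exact: phi_ge0.
by rewrite mulr_ge0 // ltW.
Qed.

End g_fun_bound.

Theorem lemma3p2 (R : realType) (d : nat) (c delta0 : R) :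
  (1 <= d)%N -> 0 < c -> 0 < delta0 -> delta0 <= 1 ->
  exists N : R, forall phi : R -> R,
    bernstein phi ->
    phi x @[x --> 0^'+] --> 0 ->
    (forall r R0 : R, 0 < r -> r < R0 -> c * powR (R0 / r) delta0 <= phi R0 / phi r) ->
    forall t v : R, 0 < t -> 0 < v ->
      (g_fun d phi t v^-1 <= (N * t * phi v^-1)%:E)%E.
Proof.
move=> _ c_gt0 delta0_gt0 _; exists (g_fun_const c d).
move=> phi phi_bernstein _ phi_lower_scaling t v t0 v0.
apply: (g_fun_le d phi_bernstein c_gt0 (ltW delta0_gt0) phi_lower_scaling _ _ t0).
by rewrite invr_gt0.
Qed.
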